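(* Let $e,f\in\mathsf{Exp}/{\sim}$ and $v_x\in V$. For all $n\in\mathbb{N}$, if $e\sim^{(n)}f$ then $\mu v_x.e\sim^{(n)}\mu v_x.f$.
   Context: Fix variables $V=\{v_1,v_2,\dots\}$ and letters $\Sigma$. Expressions: $e\in\mathsf{Exp}::=0\mid v\ (v\in V)\mid a.e\mid e+f\mid\mu v.e$ ($\mu v$ binds $v$); $e[\vec f/\vec v]$ is simultaneous capture-avoiding substitution. The prechart $(\mathsf{Exp},\partial)$: least relations with $a.e\xrightarrow{a}e$; $v\rhd v$; $e+f$ has all transitions and outputs of $e$ and of $f$; $\mu w.e\rhd v$ if $e\rhd v$, $v\ne w$; $\mu v.e\xrightarrow{a}e'[\mu v.e/v]$ if $e\xrightarrow{a}e'$. Bisimilarity $\sim$ is a congruence for all operations including substitution; $\mathsf{Exp}/{\sim}$ is a prechart via $[e]\xrightarrow{a}[e']$ iff $e\xrightarrow{a}e'$, $[e]\rhd v$ iff $e\rhd v$. Stratified bisimilarity on it: $x\sim^{(0)}y$ always; $x\sim^{(k+1)}y$ iff $x,y$ have the same outputs, every $x\xrightarrow{a}x'$ is matched by some $y\xrightarrow{a}y'$ with $x'\sim^{(k)}y'$, and symmetrically. *)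

From Stdlib Require Import List Arith.
Import ListNotations.
Set Implicit Arguments.

Section Exp.
Variable Sigma : Type.

Inductive Exp : Type :=
| Zero : Exp
| Var : nat -> Exp
| Act : Sigma -> Exp -> Exp
| Plus : Exp -> Exp -> Exp
| Mu : nat -> Exp -> Exp.

Fixpoint fv (e : Exp) : list nat :=
  match e with
  | Zero => []
  | Var v => [v]
  | Act _ e => fv e
  | Plus e f => fv e ++ fv f
  | Mu w e => remove Nat.eq_dec w (fv e)
  end.

Definition fresh (l : list nat) : nat := S (fold_right Nat.max 0 l).

Fixpoint subst (s : nat -> Exp) (e : Exp) : Exp :=
  match e with
  | Zero => Zero
  | Var v => s v
  | Act a e => Act a (subst s e)
  | Plus e f => Plus (subst s e) (subst s f)
  | Mu w e =>
      let avoid := flat_map (fun u => fv (s u)) (remove Nat.eq_dec w (fv e)) in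
      let w' := if in_dec Nat.eq_dec w avoid then fresh (avoid ++ fv e) else w in
      Mu w' (subst (fun u => if Nat.eq_dec u w then Var w' else s u) e)
  end.

Definition subst1 (e : Exp) (g : Exp) (v : nat) : Exp :=
  subst (fun u => if Nat.eq_dec u v then g else Var u) e.

Inductive step : Exp -> Sigma -> Exp -> Prop :=
| step_act : forall a e, step (Act a e) a e
| step_plusl : forall e f a e', step e a e' -> step (Plus e f) a e'
| step_plusr : forall e f a f', step f a f' -> step (Plus e f) a f'
| step_mu : forall v e a e', step e a e' -> step (Mu v e) a (subst1 e' (Mu v e) v).

Inductive out : Exp -> nat -> Prop :=
| out_var : forall v, out (Var v) v
| out_plusl : forall e f v, out e v -> out (Plus e f) v
| out_plusr : forall e f v, out f v -> out (Plus e f) v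
| out_mu : forall w e v, out e v -> v <> w -> out (Mu w e) v.

Definition is_bisimulation (R : Exp -> Exp -> Prop) : Prop :=
  forall e f, R e f ->
    (forall v, out e v <-> out f v) /\
    (forall a e', step e a e' -> exists f', step f a f' /\ R e' f') /\
    (forall a f', step f a f' -> exists e', step e a e' /\ R e' f').

Definition bisim (e f : Exp) : Prop :=
  exists R, is_bisimulation R /\ R e f.

Definition QExp : Type := { X : Exp -> Prop | exists e, X = bisim e }.

Definition cls (e : Exp) : QExp := exist _ (bisim e) (ex_intro _ e eq_refl).

Definition qstep (X : QExp) (a : Sigma) (Y : QExp) : Prop :=
  exists e e', proj1_sig X = bisim e /\ proj1_sig Y = bisim e' /\ step e a e'.

Definition qout (X : QExp) (v : nat) : Prop :=
  exists e, proj1_sig X = bisim e /\ out e v.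

Fixpoint strat (n : nat) (X Y : QExp) : Prop :=
  match n with
  | O => True
  | S k =>
      (forall v, qout X v <-> qout Y v) /\
      (forall a X', qstep X a X' -> exists Y', qstep Y a Y' /\ strat k X' Y') /\
      (forall a Y', qstep Y a Y' -> exists X', qstep X a X' /\ strat k X' Y')
  end.

End Exp.

From Stdlib Require Import List Arith Lia.

(* Bisimilar expressions are n-bisimilar for every n, so stratified bisimilarity on
   Exp/~ is stratified bisimilarity of representatives.  On expressions it is a
   congruence for substitution: a transition of e[s] is either a transition e -a-> e'
   followed by s, or a transition of s u for an output u of e, and conversely, up to
   the renaming of bound variables that the identity and composition laws of
   substitution absorb.  As mu v.e moves exactly like e followed by [mu v.e/v], the
   claim follows by induction on n. *)

Section StratifiedMu.
Variable Sigma : Type.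
Notation E := (Exp Sigma).

Definition captured (s : nat -> E) (w : nat) (e : E) : list nat :=
  flat_map (fun u => fv (s u)) (remove Nat.eq_dec w (fv e)).

Definition renamed_binder (s : nat -> E) (w : nat) (e : E) : nat :=
  if in_dec Nat.eq_dec w (captured s w e) then fresh (captured s w e ++ fv e) else w.

Definition rebind (s : nat -> E) (w w' : nat) : nat -> E :=
  fun u => if Nat.eq_dec u w then Var Sigma w' else s u.

Lemma subst_Mu s w e :
  subst s (Mu w e) = Mu (renamed_binder s w e) (subst (rebind s w (renamed_binder s w e)) e).
Proof. reflexivity. Qed.

Lemma le_fold_max l x : In x l -> x <= fold_right Nat.max 0 l.
Proof.
  induction l as [|y l IHl]; simpl; intros H; [contradiction|].
  destruct H as [->|H]; [lia|]. specialize (IHl H). lia.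
Qed.

Lemma fresh_notin l : ~ In (fresh l) l.
Proof. intros H. apply le_fold_max in H. unfold fresh in H. lia. Qed.

Lemma renamed_binder_not_fv s w e u y :
  In u (fv e) -> u <> w -> In y (fv (s u)) -> y <> renamed_binder s w e.
Proof.
  intros Hu Hw Hy.
  assert (Hcap : In y (captured s w e)).
  { apply in_flat_map. exists u. split; auto. apply in_in_remove; auto. }
  unfold renamed_binder. destruct (in_dec Nat.eq_dec w (captured s w e)).
  - intros ->. apply (fresh_notin (captured s w e ++ fv e)). apply in_or_app; auto.
  - intros ->. contradiction.
Qed.

Lemma fv_out (e : E) v : out e v -> In v (fv e).
Proof.
  induction 1; simpl; auto using in_or_app, in_in_remove.
Qed.

Lemma fv_subst_inv s (e : E) y :
  In y (fv (subst s e)) -> exists u, In u (fv e) /\ In y (fv (s u)).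
Proof.
  revert s. induction e as [|n|b e IHe|e1 IHe1 e2 IHe2|n e IHe]; intros s H.
  - contradiction.
  - exists n. simpl; auto.
  - simpl in *. auto.
  - simpl in *. apply in_app_or in H. destruct H as [H|H].
    + destruct (IHe1 s H) as (u & ? & ?). exists u; split; auto using in_or_app.
    + destruct (IHe2 s H) as (u & ? & ?). exists u; split; auto using in_or_app.
  - rewrite subst_Mu in H. simpl in H. apply in_remove in H. destruct H as [H Hne].
    destruct (IHe _ H) as (u & Hu & Hy). unfold rebind in Hy.
    destruct (Nat.eq_dec u n).
    + simpl in Hy. destruct Hy as [Hy|[]]. subst y. contradiction.
    + exists u. split; auto. simpl. apply in_in_remove; auto.
Qed.

Lemma fv_step (e : E) a e' : step e a e' -> forall y, In y (fv e') -> In y (fv e).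
Proof.
  induction 1; intros y Hy; simpl in *; auto using in_or_app.
  unfold subst1 in Hy. apply fv_subst_inv in Hy. destruct Hy as (u & Hu & Hy).
  destruct (Nat.eq_dec u v) as [_|Hne]; [exact Hy|].
  simpl in Hy. destruct Hy as [->|[]]. apply in_in_remove; auto.
Qed.

Lemma out_Plus_inv (e f : E) v : out (Plus e f) v -> out e v \/ out f v.
Proof. intros H; inversion H; subst; auto. Qed.

Lemma out_Mu_inv (e : E) w v : out (Mu w e) v -> out e v /\ v <> w.
Proof. intros H; inversion H; subst; auto. Qed.

Lemma out_Var_inv u v : out (Var Sigma u) v -> v = u.
Proof. intros H; inversion H; subst; auto. Qed.

Lemma step_Plus_inv (e f : E) a x : step (Plus e f) a x -> step e a x \/ step f a x.
Proof. intros H; inversion H; subst; auto. Qed.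

Lemma step_Mu_inv (e : E) w a x :
  step (Mu w e) a x -> exists e', step e a e' /\ x = subst1 e' (Mu w e) w.
Proof. intros H; inversion H; subst; eauto. Qed.

Lemma step_Var_inv u a (x : E) : ~ step (Var Sigma u) a x.
Proof. intros H; inversion H. Qed.

Lemma out_subst s (e : E) v :
  out (subst s e) v <-> exists u, out e u /\ out (s u) v.
Proof.
  revert s v. induction e as [|n|b e IHe|e1 IHe1 e2 IHe2|n e IHe]; intros s v.
  - split; [intros H | intros (u & H & _)]; inversion H.
  - simpl. split.
    + intros H. exists n. split; auto. constructor.
    + intros (u & H1 & H2). apply out_Var_inv in H1; subst; auto.
  - simpl. split; [intros H | intros (u & H & _)]; inversion H.
  - simpl. split.
    + intros [H|H]%out_Plus_inv.
      * apply IHe1 in H. destruct H as (u & ? & ?). exists u; split; auto. apply out_plusl; auto.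
      * apply IHe2 in H. destruct H as (u & ? & ?). exists u; split; auto. apply out_plusr; auto.
    + intros (u & [H1|H1]%out_Plus_inv & H2).
      * apply out_plusl. apply IHe1. eauto.
      * apply out_plusr. apply IHe2. eauto.
  - rewrite subst_Mu. split.
    + intros [H Hv]%out_Mu_inv. apply IHe in H. destruct H as (u & H1 & H2).
      unfold rebind in H2. destruct (Nat.eq_dec u n).
      * apply out_Var_inv in H2; subst. contradiction.
      * exists u. split; auto. constructor; auto.
    + intros (u & [H1 Hu]%out_Mu_inv & H2). constructor.
      * apply IHe. exists u. split; auto. unfold rebind. destruct (Nat.eq_dec u n); [contradiction|auto].
      * eapply renamed_binder_not_fv; eauto using fv_out.
Qed.


(* Steps of [subst s e] match those of [e] and of the [s u] only up to renaming of bound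
   variables; [subst_equiv] is the congruence generated by the identity and composition
   laws of substitution, which is enough to absorb these renamings. *)
Inductive subst_equiv : E -> E -> Prop :=
| se_refl x : subst_equiv x x
| se_sym x y : subst_equiv x y -> subst_equiv y x
| se_trans x y z : subst_equiv x y -> subst_equiv y z -> subst_equiv x z
| se_subst s t e f : subst_equiv e f ->
    (forall u, In u (fv e) -> subst_equiv (s u) (t u)) ->
    subst_equiv (subst s e) (subst t f)
| se_subst_id s e : (forall u, In u (fv e) -> s u = Var Sigma u) -> subst_equiv (subst s e) e
| se_subst_comp s t e :
    subst_equiv (subst t (subst s e)) (subst (fun u => subst t (s u)) e).

Lemma se_subst_l s e f : subst_equiv e f -> subst_equiv (subst s e) (subst s f).
Proof. intros H. apply se_subst; auto using se_refl. Qed.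

Lemma se_subst1_not_fv (x : E) g w : ~ In w (fv x) -> subst_equiv (subst1 x g w) x.
Proof.
  intros H. apply se_subst_id. intros u Hu.
  destruct (Nat.eq_dec u w); [subst; contradiction|reflexivity].
Qed.

Lemma se_subst_unfold s w e e' x :
  (forall y, In y (fv e') -> In y (fv e)) ->
  subst_equiv x (subst (rebind s w (renamed_binder s w e)) e') ->
  subst_equiv (subst1 x (subst s (Mu w e)) (renamed_binder s w e))
              (subst s (subst1 e' (Mu w e) w)).
Proof.
  intros Hfv Hx. unfold subst1.
  eapply se_trans; [apply se_subst_l, Hx|].
  eapply se_trans; [apply se_subst_comp|].
  eapply se_trans; [|apply se_sym, se_subst_comp].
  apply se_subst; [apply se_refl|]. intros u Hu. unfold rebind.
  destruct (Nat.eq_dec u w) as [->|Hne]; simpl.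
  - destruct (Nat.eq_dec (renamed_binder s w e) (renamed_binder s w e)); [apply se_refl|congruence].
  - destruct (Nat.eq_dec u w); [contradiction|].
    apply se_subst_id. intros y Hy. destruct (Nat.eq_dec y (renamed_binder s w e)); auto.
    exfalso. apply (renamed_binder_not_fv s w e u y); auto.
Qed.

Lemma step_subst_inv s (e : E) a x : step (subst s e) a x ->
  (exists e', step e a e' /\ subst_equiv x (subst s e')) \/
  (exists u x', out e u /\ step (s u) a x' /\ subst_equiv x x').
Proof.
  revert s x. induction e as [|n|b e IHe|e1 IHe1 e2 IHe2|n e IHe]; intros s x H.
  - inversion H.
  - right. exists n, x. split; [constructor|split; auto using se_refl].
  - inversion H; subst. left. exists e. split; [constructor|apply se_refl].
  - apply step_Plus_inv in H. destruct H as [H|H].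
    + destruct (IHe1 _ _ H) as [(e' & H1 & H2)|(u & x1 & H1 & H2 & H3)].
      * left. exists e'. split; auto. apply step_plusl; auto.
      * right. exists u, x1. split; auto. apply out_plusl; auto.
    + destruct (IHe2 _ _ H) as [(e' & H1 & H2)|(u & x1 & H1 & H2 & H3)].
      * left. exists e'. split; auto. apply step_plusr; auto.
      * right. exists u, x1. split; auto. apply out_plusr; auto.
  - rewrite subst_Mu in H. apply step_Mu_inv in H. destruct H as (x0 & Hx0 & ->).
    rewrite <- subst_Mu.
    destruct (IHe _ _ Hx0) as [(e' & H1 & H2)|(u & x1 & H1 & H2 & H3)].
    + left. exists (subst1 e' (Mu n e) n). split; [constructor; auto|].
      apply se_subst_unfold; auto. intros y Hy. eapply fv_step; eauto.
    + unfold rebind in H2. destruct (Nat.eq_dec u n) as [_|Hne].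
      * now apply step_Var_inv in H2.
      * right. exists u, x1. split; [constructor; auto|split; auto].
        eapply se_trans; [apply se_subst_l, H3|].
        apply se_subst1_not_fv. intros Hin.
        apply (renamed_binder_not_fv s n e u (renamed_binder s n e)); auto using fv_out.
        eapply fv_step; eauto.
Qed.

Lemma step_subst s (e : E) a e' : step e a e' ->
  exists x, step (subst s e) a x /\ subst_equiv x (subst s e').
Proof.
  intros H. revert s. induction H; intros s.
  - exists (subst s e). split; [constructor|apply se_refl].
  - destruct (IHstep s) as (x & H1 & H2). exists x. split; auto. apply step_plusl; auto.
  - destruct (IHstep s) as (x & H1 & H2). exists x. split; auto. apply step_plusr; auto.
  - destruct (IHstep (rebind s v (renamed_binder s v e))) as (x & H1 & H2).
    exists (subst1 x (subst s (Mu v e)) (renamed_binder s v e)). split.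
    + rewrite subst_Mu. constructor. exact H1.
    + apply se_subst_unfold; auto. intros y Hy. eapply fv_step; eauto.
Qed.

Lemma step_subst_out s (e : E) u a x : out e u -> step (s u) a x ->
  exists x', step (subst s e) a x' /\ subst_equiv x' x.
Proof.
  intros H. revert s x. induction H; intros s x Hs.
  - exists x. split; auto using se_refl.
  - destruct (IHout s x Hs) as (x' & H1 & H2). exists x'. split; auto. apply step_plusl; auto.
  - destruct (IHout s x Hs) as (x' & H1 & H2). exists x'. split; auto. apply step_plusr; auto.
  - assert (Hs' : step (rebind s w (renamed_binder s w e) v) a x).
    { unfold rebind. destruct (Nat.eq_dec v w); [contradiction|exact Hs]. }
    destruct (IHout _ _ Hs') as (x0 & H1 & H2).
    exists (subst1 x0 (subst s (Mu w e)) (renamed_binder s w e)). split.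
    + rewrite subst_Mu. constructor. exact H1.
    + eapply se_trans; [apply se_subst_l, H2|].
      apply se_subst1_not_fv. intros Hin.
      apply (renamed_binder_not_fv s w e v (renamed_binder s w e)); auto using fv_out.
      eapply fv_step; eauto.
Qed.


Definition progresses (R : E -> E -> Prop) (x y : E) : Prop :=
  (forall v, out x v <-> out y v) /\
  (forall a x', step x a x' -> exists y', step y a y' /\ R x' y') /\
  (forall a y', step y a y' -> exists x', step x a x' /\ R x' y').

Lemma progresses_mono (R R' : E -> E -> Prop) x y :
  (forall x y, R x y -> R' x y) -> progresses R x y -> progresses R' x y.
Proof.
  intros HRR' (Ho & Hf & Hb). split; [exact Ho|split].
  - intros a x' H. destruct (Hf a x' H) as (y' & ? & ?). eauto.
  - intros a y' H. destruct (Hb a y' H) as (x' & ? & ?). eauto.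
Qed.

Lemma progresses_refl (R : E -> E -> Prop) x : (forall x, R x x) -> progresses R x x.
Proof. intros HR. split; [tauto|split; intros; eauto]. Qed.

Lemma progresses_sym (R : E -> E -> Prop) x y :
  (forall x y, R x y -> R y x) -> progresses R x y -> progresses R y x.
Proof.
  intros HR (Ho & Hf & Hb). split; [intros v; rewrite Ho; tauto|split].
  - intros a y' H. destruct (Hb a y' H) as (x' & ? & ?). eauto.
  - intros a x' H. destruct (Hf a x' H) as (y' & ? & ?). eauto.
Qed.

Lemma progresses_trans (R : E -> E -> Prop) x y z :
  (forall x y z, R x y -> R y z -> R x z) ->
  progresses R x y -> progresses R y z -> progresses R x z.
Proof.
  intros HR (Ho1 & Hf1 & Hb1) (Ho2 & Hf2 & Hb2).
  split; [intros v; rewrite Ho1; auto|split].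
  - intros a x' H. destruct (Hf1 a x' H) as (y' & H1 & H2).
    destruct (Hf2 a y' H1) as (z' & ? & ?). eauto.
  - intros a z' H. destruct (Hb2 a z' H) as (y' & H1 & H2).
    destruct (Hb1 a y' H1) as (x' & ? & ?). eauto.
Qed.

Section ProgressSubst.
Variable R : E -> E -> Prop.
Hypothesis R_of_se : forall x y, subst_equiv x y -> R x y.
Hypothesis R_trans : forall x y z, R x y -> R y z -> R x z.
Hypothesis R_subst : forall s t e f, R e f ->
  (forall u, In u (fv e) -> R (s u) (t u)) -> R (subst s e) (subst t f).

Lemma progresses_subst s t e f :
  progresses R e f ->
  (forall u, In u (fv e) -> R (s u) (t u) /\ progresses R (s u) (t u)) ->
  progresses R (subst s e) (subst t f).
Proof.
  intros (Ho & Hf & Hb) Hst.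
  assert (Hout : forall u, out e u -> forall v, out (s u) v <-> out (t u) v).
  { intros u Hu. apply (Hst u (fv_out _ _ Hu)). }
  split; [|split].
  - intros v. rewrite !out_subst. split; intros (u & H1 & H2); exists u.
    + split; [apply Ho; auto|]. apply (Hout u H1); auto.
    + split; [apply Ho; auto|]. apply (Hout u (proj2 (Ho u) H1)); auto.
  - intros a x H. destruct (step_subst_inv _ _ _ _ H) as [(e' & H1 & H2)|(u & x1 & H1 & H2 & H3)].
    + destruct (Hf _ _ H1) as (f' & H4 & H5).
      destruct (step_subst t _ _ _ H4) as (y & H6 & H7). exists y. split; auto.
      eapply R_trans; [apply R_of_se, H2|]. eapply R_trans; [|apply R_of_se, se_sym, H7].
      apply R_subst; auto. intros u Hu. apply Hst. eapply fv_step; eauto.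
    + destruct (Hst u (fv_out _ _ H1)) as (_ & _ & Hfu & _).
      destruct (Hfu _ _ H2) as (y1 & H4 & H5).
      destruct (step_subst_out t _ _ _ _ (proj1 (Ho u) H1) H4) as (y & H6 & H7).
      exists y. split; auto.
      eapply R_trans; [apply R_of_se, H3|]. eapply R_trans; [apply H5|].
      apply R_of_se, se_sym, H7.
  - intros a y H. destruct (step_subst_inv _ _ _ _ H) as [(f' & H1 & H2)|(u & y1 & H1 & H2 & H3)].
    + destruct (Hb _ _ H1) as (e' & H4 & H5).
      destruct (step_subst s _ _ _ H4) as (x & H6 & H7). exists x. split; auto.
      eapply R_trans; [apply R_of_se, H7|]. eapply R_trans; [|apply R_of_se, se_sym, H2].
      apply R_subst; auto. intros u Hu. apply Hst. eapply fv_step; eauto.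
    + assert (Heu : out e u) by (apply Ho; auto).
      destruct (Hst u (fv_out _ _ Heu)) as (_ & _ & _ & Hbu).
      destruct (Hbu _ _ H2) as (x1 & H4 & H5).
      destruct (step_subst_out s _ _ _ _ Heu H4) as (x & H6 & H7). exists x. split; auto.
      eapply R_trans; [apply R_of_se, H7|]. eapply R_trans; [apply H5|].
      apply R_of_se, se_sym, H3.
Qed.

End ProgressSubst.

Lemma progresses_subst_id s e : (forall u, In u (fv e) -> s u = Var Sigma u) ->
  progresses subst_equiv (subst s e) e.
Proof.
  intros Hid. split; [|split].
  - intros v. rewrite out_subst. split.
    + intros (u & H1 & H2). rewrite (Hid u (fv_out _ _ H1)) in H2.
      apply out_Var_inv in H2. subst. auto.
    + intros H. exists v. split; auto. rewrite (Hid v (fv_out _ _ H)). constructor.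
  - intros a x H. destruct (step_subst_inv _ _ _ _ H) as [(e' & H1 & H2)|(u & x1 & H1 & H2 & H3)].
    + exists e'. split; auto. eapply se_trans; [exact H2|]. apply se_subst_id.
      intros u Hu. apply Hid. eapply fv_step; eauto.
    + rewrite (Hid u (fv_out _ _ H1)) in H2. now apply step_Var_inv in H2.
  - intros a e' H. destruct (step_subst s _ _ _ H) as (x & H1 & H2). exists x. split; auto.
    eapply se_trans; [exact H2|]. apply se_subst_id. intros u Hu. apply Hid. eapply fv_step; eauto.
Qed.

Lemma progresses_subst_comp s t e :
  progresses subst_equiv (subst t (subst s e)) (subst (fun u => subst t (s u)) e).
Proof.
  set (st := fun u => subst t (s u)). split; [|split].
  - intros v. rewrite !out_subst. split.
    + intros (w & (u & H1 & H2)%out_subst & H3). exists u. split; auto. apply out_subst. eauto.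
    + intros (u & H1 & (w & H2 & H3)%out_subst). exists w. split; auto. apply out_subst. eauto.
  - intros a x H. destruct (step_subst_inv _ _ _ _ H) as [(z & H1 & H2)|(w & x1 & H1 & H2 & H3)].
    + destruct (step_subst_inv _ _ _ _ H1) as [(e' & H4 & H5)|(u & z1 & H4 & H5 & H6)].
      * destruct (step_subst st _ _ _ H4) as (y & H6 & H7). exists y. split; auto.
        eapply se_trans; [exact H2|]. eapply se_trans; [apply se_subst_l, H5|].
        eapply se_trans; [apply se_subst_comp|]. apply se_sym, H7.
      * destruct (step_subst t _ _ _ H5) as (y1 & H7 & H8).
        destruct (step_subst_out st _ _ _ _ H4 H7) as (y & H9 & H10). exists y. split; auto.
        eapply se_trans; [exact H2|]. eapply se_trans; [apply se_subst_l, H6|].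
        eapply se_trans; [apply se_sym, H8|]. apply se_sym, H10.
    + apply out_subst in H1. destruct H1 as (u & H4 & H5).
      destruct (step_subst_out t _ _ _ _ H5 H2) as (y1 & H6 & H7).
      destruct (step_subst_out st _ _ _ _ H4 H6) as (y & H8 & H9). exists y. split; auto.
      eapply se_trans; [exact H3|]. eapply se_trans; [apply se_sym, H7|]. apply se_sym, H9.
  - intros a y H. destruct (step_subst_inv _ _ _ _ H) as [(e' & H1 & H2)|(u & y1 & H1 & H2 & H3)].
    + destruct (step_subst s _ _ _ H1) as (z & H4 & H5).
      destruct (step_subst t _ _ _ H4) as (x & H6 & H7). exists x. split; auto.
      eapply se_trans; [exact H7|]. eapply se_trans; [apply se_subst_l, H5|].
      eapply se_trans; [apply se_subst_comp|]. apply se_sym, H2.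
    + destruct (step_subst_inv _ _ _ _ H2) as [(z & H4 & H5)|(w & y2 & H4 & H5 & H6)].
      * destruct (step_subst_out s _ _ _ _ H1 H4) as (z2 & H7 & H8).
        destruct (step_subst t _ _ _ H7) as (x & H9 & H10). exists x. split; auto.
        eapply se_trans; [exact H10|]. eapply se_trans; [apply se_subst_l, H8|].
        eapply se_trans; [apply se_sym, H5|]. apply se_sym, H3.
      * assert (Hw : out (subst s e) w) by (apply out_subst; eauto).
        destruct (step_subst_out t _ _ _ _ Hw H5) as (x & H7 & H8). exists x. split; auto.
        eapply se_trans; [exact H8|]. eapply se_trans; [apply se_sym, H6|]. apply se_sym, H3.
Qed.

Lemma subst_equiv_progresses x y : subst_equiv x y -> progresses subst_equiv x y.
Proof.
  induction 1 as [x|x y _ IH|x y z _ IH1 _ IH2|s t e f _ IHef Hst IHst|s e Hid|s t e].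
  - apply progresses_refl, se_refl.
  - apply progresses_sym; [apply se_sym|exact IH].
  - apply (progresses_trans _ _ y); [apply se_trans|exact IH1|exact IH2].
  - apply progresses_subst; [exact (fun x y H => H)|apply se_trans|apply se_subst|exact IHef|auto].
  - apply progresses_subst_id, Hid.
  - apply progresses_subst_comp.
Qed.

Fixpoint strat_exp (k : nat) : E -> E -> Prop :=
  match k with
  | O => fun _ _ => True
  | S k => progresses (strat_exp k)
  end.

Lemma strat_exp_refl k x : strat_exp k x x.
Proof. revert x; induction k; intros x; simpl; auto using progresses_refl. Qed.

Lemma strat_exp_sym k x y : strat_exp k x y -> strat_exp k y x.
Proof. revert x y; induction k; simpl; auto using progresses_sym. Qed.

Lemma strat_exp_trans k x y z : strat_exp k x y -> strat_exp k y z -> strat_exp k x z.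
Proof. revert x y z; induction k; simpl; eauto using progresses_trans. Qed.

Lemma strat_exp_S k x y : strat_exp (S k) x y -> strat_exp k x y.
Proof.
  revert x y; induction k; intros x y; simpl; auto.
  apply progresses_mono, IHk.
Qed.

Lemma strat_exp_of_subst_equiv k x y : subst_equiv x y -> strat_exp k x y.
Proof.
  revert x y; induction k; intros x y H; simpl; auto.
  exact (progresses_mono _ _ _ _ IHk (subst_equiv_progresses _ _ H)).
Qed.

Lemma strat_exp_subst k s t e f : strat_exp k e f ->
  (forall u, In u (fv e) -> strat_exp k (s u) (t u)) ->
  strat_exp k (subst s e) (subst t f).
Proof.
  revert s t e f; induction k; intros s t e f Hef Hst; simpl; auto.
  apply progresses_subst; [apply strat_exp_of_subst_equiv|apply strat_exp_trans|exact IHk|exact Hef|].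
  intros u Hu. split; [apply strat_exp_S|]; apply Hst, Hu.
Qed.

Lemma strat_exp_Mu k v e f : strat_exp k e f -> strat_exp k (Mu v e) (Mu v f).
Proof.
  revert e f; induction k; intros e f Hef; simpl; auto.
  destruct Hef as (Ho & Hf & Hb).
  assert (Hunfold : forall x y, strat_exp k x y ->
            strat_exp k (subst1 x (Mu v e) v) (subst1 y (Mu v f) v)).
  { intros x y Hxy. apply strat_exp_subst; auto. intros u _.
    destruct (Nat.eq_dec u v).
    - apply IHk, strat_exp_S. split; auto.
    - apply strat_exp_refl. }
  split; [|split].
  - intros u. split; intros [H1 H2]%out_Mu_inv; constructor; auto; apply Ho; auto.
  - intros a x H. apply step_Mu_inv in H. destruct H as (e' & H1 & ->).
    destruct (Hf _ _ H1) as (f' & H2 & H3). eexists. split; [constructor; exact H2|]. auto.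
  - intros a y H. apply step_Mu_inv in H. destruct H as (f' & H1 & ->).
    destruct (Hb _ _ H1) as (e' & H2 & H3). eexists. split; [constructor; exact H2|]. auto.
Qed.


Lemma bisim_progresses (x y : E) : bisim x y -> progresses (@bisim Sigma) x y.
Proof.
  intros (R & HR & Hxy). apply (progresses_mono R); [|exact (HR x y Hxy)].
  intros x' y' H. exists R; auto.
Qed.

Lemma strat_exp_of_bisim k (x y : E) : bisim x y -> strat_exp k x y.
Proof.
  revert x y; induction k; intros x y H; simpl; auto.
  exact (progresses_mono _ _ _ _ IHk (bisim_progresses _ _ H)).
Qed.

Lemma bisim_of_class_eq (x y : E) : bisim x = bisim y -> bisim x y.
Proof.
  intros ->. exists eq. split; auto.
  intros e f ->. apply progresses_refl. reflexivity.
Qed.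

Section Representatives.
Variables (X : QExp Sigma) (e : E).
Hypothesis X_rep : proj1_sig X = bisim e.

Lemma qout_rep v : qout X v <-> out e v.
Proof.
  split.
  - intros (e1 & H1 & H2). rewrite X_rep in H1.
    apply (bisim_progresses _ _ (bisim_of_class_eq _ _ H1)), H2.
  - intros H. exists e. auto.
Qed.

Lemma qstep_rep a Y : qstep X a Y ->
  exists e' y, step e a e' /\ proj1_sig Y = bisim y /\ bisim e' y.
Proof.
  intros (e1 & y & H1 & HY & H). rewrite X_rep in H1.
  destruct (bisim_progresses _ _ (bisim_of_class_eq _ _ H1)) as (_ & _ & Hb).
  destruct (Hb _ _ H) as (e' & ? & ?). exists e', y. auto.
Qed.

Lemma qstep_cls a e' : step e a e' -> qstep X a (cls e').
Proof. intros H. exists e, e'. auto. Qed.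

End Representatives.

Lemma strat_rep n X Y e f : proj1_sig X = bisim e -> proj1_sig Y = bisim f ->
  (strat n X Y <-> strat_exp n e f).
Proof.
  revert X Y e f; induction n; intros X Y e f HX HY; simpl; [tauto|].
  assert (Hout : forall v, (qout X v <-> qout Y v) <-> (out e v <-> out f v)).
  { intros v. rewrite (qout_rep _ _ HX), (qout_rep _ _ HY). tauto. }
  split; intros (Ho & Hf & Hb); (split; [intros v; apply Hout, Ho|split]).
  - intros a e' H. destruct (Hf _ _ (qstep_cls _ _ HX _ _ H)) as (Y' & HY' & Hst).
    destruct (qstep_rep _ _ HY _ _ HY') as (f' & y & H1 & H2 & H3).
    exists f'. split; auto. eapply strat_exp_trans; [apply (IHn (cls e') Y' e' y eq_refl H2), Hst|].
    apply strat_exp_sym, strat_exp_of_bisim, H3.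
  - intros a f' H. destruct (Hb _ _ (qstep_cls _ _ HY _ _ H)) as (X' & HX' & Hst).
    destruct (qstep_rep _ _ HX _ _ HX') as (e' & x & H1 & H2 & H3).
    exists e'. split; auto. eapply strat_exp_trans; [apply strat_exp_of_bisim, H3|].
    apply (IHn X' (cls f') x f' H2 eq_refl), Hst.
  - intros a X' HX'. destruct (qstep_rep _ _ HX _ _ HX') as (e' & x & H1 & H2 & H3).
    destruct (Hf _ _ H1) as (f' & H4 & H5).
    exists (cls f'). split; [apply (qstep_cls _ _ HY), H4|].
    apply (IHn X' (cls f') x f' H2 eq_refl). eapply strat_exp_trans; [|exact H5].
    apply strat_exp_sym, strat_exp_of_bisim, H3.
  - intros a Y' HY'. destruct (qstep_rep _ _ HY _ _ HY') as (f' & y & H1 & H2 & H3).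
    destruct (Hb _ _ H1) as (e' & H4 & H5).
    exists (cls e'). split; [apply (qstep_cls _ _ HX), H4|].
    apply (IHn (cls e') Y' e' y eq_refl H2). eapply strat_exp_trans; [exact H5|].
    apply strat_exp_of_bisim, H3.
Qed.

Lemma strat_cls n e f : strat n (cls e) (cls f) <-> strat_exp n e f.
Proof. apply strat_rep; reflexivity. Qed.

End StratifiedMu.

Theorem mainTheorem13 (Sigma : Type) (e f : Exp Sigma) (vx : nat) :
  forall n : nat, strat n (cls e) (cls f) -> strat n (cls (Mu vx e)) (cls (Mu vx f)).
Proof.
  intros n. rewrite !strat_cls. apply strat_exp_Mu.
Qed.
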